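(* Let $I$ be a finite or infinite non-empty index set and let $\mathbb{K}$ be a positive commutative monoid. The following are equivalent: (1) $\mathbb{K}$ has the transportation property; (2) $\mathbb{K}^I$ has the transportation property; (3) $\mathbb{K}^I_{\mathrm{fin}}$ has the transportation property.
   Context: Positive: $p+q=0\Rightarrow p=q=0$. $\mathbb{K}^I$ is the monoid of all maps $f:I\to K$ with pointwise addition $(f+g)(i)=f(i)+g(i)$ and the constant-$0$ map as neutral element; $\mathbb{K}^I_{\mathrm{fin}}$ is its submonoid of maps $f$ with $f(i)\ne0$ for only finitely many $i$. A monoid $(M,+,0)$ has the transportation property if for all positive integers $m,n$ and all $b\in M^m$, $c\in M^n$ with $b_1+\dots+b_m=c_1+\dots+c_n$ there is $(d_{ij})\in M^{m\times n}$ with $\sum_j d_{ij}=b_i$ for all $i$ and $\sum_i d_{ij}=c_j$ for all $j$. *)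

From HB Require Import structures.
From Stdlib Require List.
From mathcomp Require Import all_boot all_order all_algebra.
Set Implicit Arguments. Unset Strict Implicit. Unset Printing Implicit Defensive.
Import GRing.Theory.
Local Open Scope ring_scope.

Definition transportation (M : Type) (add : M -> M -> M) (zero : M) : Prop :=
  forall (m n : nat) (b : 'I_m -> M) (c : 'I_n -> M),
    (0 < m)%N -> (0 < n)%N ->
    \big[add/zero]_(i < m) b i = \big[add/zero]_(j < n) c j ->
    exists d : 'I_m -> 'I_n -> M,
      (forall i, \big[add/zero]_(j < n) d i j = b i) /\
      (forall j, \big[add/zero]_(i < m) d i j = c j).

Definition positive_monoid (K : nmodType) : Prop :=
  forall p q : K, p + q = 0 -> p = 0 /\ q = 0.

Definition fun_add (I : Type) (K : nmodType) (f g : I -> K) : I -> K :=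
  fun i => f i + g i.
Definition fun_zero (I : Type) (K : nmodType) : I -> K := fun _ => 0.

Definition fin_supp (I : Type) (K : nmodType) (f : I -> K) : Prop :=
  exists s : seq I, forall i, f i != 0 -> List.In i s.

Definition finfunsupp (I : Type) (K : nmodType) := {f : I -> K | fin_supp f}.

Lemma fin_supp_add (I : Type) (K : nmodType) (f g : I -> K) :
  fin_supp f -> fin_supp g -> fin_supp (fun_add f g).
Proof.
move=> [s Hs] [t Ht]; exists (s ++ t) => i Hi.
apply List.in_or_app.
case: (eqVneq (f i) 0) => [Hf|Hf]; last by left; apply: Hs.
right; apply: Ht; apply: contra Hi => /eqP Hg.
by rewrite /fun_add Hf Hg addr0.
Qed.

Lemma fin_supp_zero (I : Type) (K : nmodType) : fin_supp (@fun_zero I K).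
Proof. by exists [::] => i; rewrite /fun_zero eqxx. Qed.

Definition finfun_add (I : Type) (K : nmodType) (f g : finfunsupp I K)
  : finfunsupp I K :=
  exist _ (fun_add (proj1_sig f) (proj1_sig g))
    (fin_supp_add (proj2_sig f) (proj2_sig g)).

Definition finfun_zero (I : Type) (K : nmodType) : finfunsupp I K :=
  exist _ (@fun_zero I K) (fin_supp_zero I K).

(* (1) => (2) is pointwise: solve the transportation problem in every coordinate
   and assemble the plans by choice.  (2) => (3): by positivity, a summand of a
   finitely supported map is finitely supported, so a plan in K^I for finitely
   supported margins already lives in K^I_fin.  (3) => (1): K is a retract of
   K^I_fin (embed k as the map that is k at a fixed index i0 and 0 elsewhere,
   evaluate at i0), and retracts inherit the transportation property. *)
From mathcomp Require Import all_boot all_order all_algebra.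
From Stdlib Require Import ClassicalEpsilon FunctionalExtensionality ProofIrrelevance.
Import GRing.Theory.

Lemma transportation_retract (M N : Type) (addM : M -> M -> M) (zeroM : M)
    (addN : N -> N -> N) (zeroN : N) (e : N -> M) (r : M -> N) :
  {morph e : x y / addN x y >-> addM x y} -> e zeroN = zeroM ->
  {morph r : x y / addM x y >-> addN x y} -> r zeroM = zeroN ->
  cancel e r ->
  transportation addM zeroM -> transportation addN zeroN.
Proof.
move=> eD e0 rD r0 eK T m n b c m0 n0 Ebc.
have [|d [db dc]] := T m n (e \o b) (e \o c) m0 n0.
  by rewrite -!(big_morph e eD e0) Ebc.
exists (fun i j => r (d i j)); split.
- by move=> i; rewrite -(big_morph r rD r0) db eK.
- by move=> j; rewrite -(big_morph r rD r0) dc eK.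
Qed.

Section FunctionMonoid.

Variables (I : Type) (K : nmodType).

Lemma big_fun_addE (m : nat) (F : 'I_m -> I -> K) x :
  (\big[@fun_add I K/@fun_zero I K]_(i < m) F i) x = (\sum_(i < m) F i x)%R.
Proof. exact: (big_morph (fun f => f x)). Qed.

Lemma transportation_fun :
  transportation (@GRing.add K) 0%R -> transportation (@fun_add I K) (@fun_zero I K).
Proof.
move=> T m n b c m0 n0 Ebc.
have plan_at x : exists d : 'I_m -> 'I_n -> K,
    (forall i, (\sum_(j < n) d i j)%R = b i x) /\
    (forall j, (\sum_(i < m) d i j)%R = c j x).
  by apply: T => //; rewrite -!big_fun_addE Ebc.
pose D x := proj1_sig (constructive_indefinite_description _ (plan_at x)).
have D_plan x := proj2_sig (constructive_indefinite_description _ (plan_at x)).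
exists (fun i j x => D x i j); split.
- by move=> i; apply: functional_extensionality => x; rewrite big_fun_addE (D_plan x).1.
- by move=> j; apply: functional_extensionality => x; rewrite big_fun_addE (D_plan x).2.
Qed.

Lemma finfunsupp_eq (f g : finfunsupp I K) : proj1_sig f = proj1_sig g -> f = g.
Proof. by case: f g => f fs [g gs] /= fg; subst g; rewrite (proof_irrelevance _ fs gs). Qed.

Lemma proj1_big_finfun_add (m : nat) (F : 'I_m -> finfunsupp I K) :
  proj1_sig (\big[@finfun_add I K/@finfun_zero I K]_(i < m) F i)
  = \big[@fun_add I K/@fun_zero I K]_(i < m) proj1_sig (F i).
Proof. exact: (big_morph (@proj1_sig _ _)). Qed.

Hypothesis K_pos : positive_monoid K.

Lemma positive_sum_eq0 (n : nat) (F : 'I_n -> K) :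
  (\sum_(j < n) F j = 0)%R -> forall j, F j = 0%R.
Proof.
elim: n F => [|n IH] F; first by move=> _ [].
rewrite big_ord_recl => /K_pos [F0 Flift] j.
by case: (unliftP ord0 j) => [j'|] ->; [exact: (IH _ Flift) | exact: F0].
Qed.

Lemma fin_supp_summand (n : nat) (F : 'I_n -> I -> K) j :
  fin_supp (\big[@fun_add I K/@fun_zero I K]_(j < n) F j) -> fin_supp (F j).
Proof.
move=> [s s_supp]; exists s => x Fjx; apply: s_supp; rewrite big_fun_addE.
by apply: contra Fjx => /eqP/positive_sum_eq0 ->.
Qed.

Lemma transportation_finfun :
  transportation (@fun_add I K) (@fun_zero I K) ->
  transportation (@finfun_add I K) (@finfun_zero I K).
Proof.
move=> T m n b c m0 n0 Ebc.
have [|d [db dc]] := T m n (fun i => proj1_sig (b i)) (fun j => proj1_sig (c j)) m0 n0.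
  by rewrite -!proj1_big_finfun_add Ebc.
have d_fin i j : fin_supp (d i j).
  by apply: (@fin_supp_summand n (d i)); rewrite db; exact: proj2_sig.
exists (fun i j => exist _ (d i j) (d_fin i j)); split.
- by move=> i; apply: finfunsupp_eq; rewrite proj1_big_finfun_add db.
- by move=> j; apply: finfunsupp_eq; rewrite proj1_big_finfun_add dc.
Qed.

End FunctionMonoid.

Section Single.

Variables (I : Type) (K : nmodType) (i0 : I).

Definition single (k : K) : I -> K :=
  fun x => if excluded_middle_informative (x = i0) then k else 0%R.

Lemma fin_supp_single (k : K) : fin_supp (single k).
Proof.
exists [:: i0] => x; rewrite /single.
by case: excluded_middle_informative => [xi0 _|_ /eqP //]; left.
Qed.

Definition finsingle (k : K) : finfunsupp I K := exist _ (single k) (fin_supp_single k).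

Lemma transportation_of_finfun :
  transportation (@finfun_add I K) (@finfun_zero I K) ->
  transportation (@GRing.add K) 0%R.
Proof.
apply: (@transportation_retract _ _ _ _ _ _ finsingle (fun f => proj1_sig f i0)) => //.
- move=> k l; apply: finfunsupp_eq; apply: functional_extensionality => x.
  by rewrite /= /fun_add /single; case: excluded_middle_informative => _ /=; rewrite ?addr0.
- apply: finfunsupp_eq; apply: functional_extensionality => x.
  by rewrite /= /single /fun_zero; case: excluded_middle_informative.
- by move=> k; rewrite /= /single; case: excluded_middle_informative.
Qed.

End Single.

Theorem proposition30 (I : Type) (K : nmodType) :
  inhabited I -> positive_monoid K ->
  [<-> transportation (@GRing.add K) (0 : K)%R;
       transportation (@fun_add I K) (@fun_zero I K);
       transportation (@finfun_add I K) (@finfun_zero I K)].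
Proof.
move=> [i0] K_pos; tfae.
- exact: transportation_fun.
- exact: transportation_finfun.
- exact: transportation_of_finfun i0.
Qed.
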